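(* Let $(L,\le,(\sqsubseteq_\alpha)_{\alpha<\kappa})$ be a model of Axioms 1–4. Let $(x_\alpha)_{\alpha<\kappa}$ be a compatible sequence and let $x=\bigvee_{\alpha<\kappa}x_\alpha$. Then $x|_\alpha=x_\alpha$ for all $\alpha<\kappa$. Consequently, the following two maps are mutually inverse bijections between $L$ and the set of compatible sequences: - $x\mapsto(x|_\alpha)_{\alpha<\kappa}$; - $(x_\alpha)_{\alpha<\kappa}\mapsto\bigvee_{\alpha<\kappa}x_\alpha$.
   Context: Setting (model of Axioms 1–4). Let $(L,\le)$ be a complete lattice with join operation $\bigvee$ and least element $\perp$. Let $\kappa>0$ be an ordinal, and for each ordinal $\alpha<\kappa$ let $\sqsubseteq_\alpha$ be a preorder on $L$. Derived relation: $x=_\alpha y$ means $x\sqsubseteq_\alpha y$ and $y\sqsubseteq_\alpha x$. Derived sets, for $x\in L$ and $\alpha<\kappa$: - $(x]_\alpha=\{y\in L:\forall\beta<\alpha,\ x=_\beta y\}$. - $[x]_\alpha=\{y\in L: x=_\alpha y\}$. For a set $X$, $X\sqsubseteq_\alpha y$ means $x\sqsubseteq_\alpha y$ for all $x\in X$. The structure is a model of Axioms 1–4 if: - (A1) for all $\alpha<\beta<\kappa$, $x\sqsubseteq_\beta y$ implies $x=_\alpha y$; - (A2) $\bigcap_{\alpha<\kappa}=_\alpha$ is the identity relation on $L$; - (A3) for every $x\in L$, every $\alpha<\kappa$ and every $X\subseteq(x]_\alpha$ there is $y\in(x]_\alpha$ with $X\sqsubseteq_\alpha y$ such that for all $z\in(x]_\alpha$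 with $X\sqsubseteq_\alpha z$ we have $y\sqsubseteq_\alpha z$ and $y\le z$; - (A4) for every nonempty $X\subseteq L$, every $\alpha<\kappa$ and every $y\in L$, if $y=_\alpha x$ for all $x\in X$ then $y=_\alpha\bigvee X$. The element $y$ of (A3) is unique and is denoted $\bigsqcup_\alpha X$. The slice of $x$ at $\alpha$ is $x|_\alpha:=\bigsqcup_\alpha\{x\}$, where $\{x\}\subseteq(x]_\alpha$. A sequence $(x_\alpha)_{\alpha<\kappa}$ in $L$ is compatible if each $x_\alpha$ is the $\le$-least element of $[x_\alpha]_\alpha$ and $x_\alpha=_\alpha x_\beta$ for all $\alpha<\beta<\kappa$. *)

From Stdlib Require Import Classical ClassicalEpsilon.

Set Implicit Arguments.

Section Model.
Variables (L : Type) (le : L -> L -> Prop) (sup : (L -> Prop) -> L).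
(* The ordinal kappa is represented by the well-ordered index type I of
   ordinals alpha < kappa, with strict order lt. *)
Variables (I : Type) (lt : I -> I -> Prop) (pre : I -> L -> L -> Prop).

Definition complete_lattice : Prop :=
  (forall x, le x x) /\
  (forall x y, le x y -> le y x -> x = y) /\
  (forall x y z, le x y -> le y z -> le x z) /\
  (forall X : L -> Prop, (forall x, X x -> le x (sup X)) /\
     (forall u, (forall x, X x -> le x u) -> le (sup X) u)).

Definition nonzero_ordinal : Prop :=
  (exists i : I, True) /\
  (forall a, ~ lt a a) /\
  (forall a b c, lt a b -> lt b c -> lt a c) /\
  (forall a b, lt a b \/ a = b \/ lt b a) /\
  well_founded lt.

Definition preorders : Prop :=
  forall a, (forall x, pre a x x) /\
            (forall x y z, pre a x y -> pre a y z -> pre a x z).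

Definition eqa (a : I) (x y : L) : Prop := pre a x y /\ pre a y x.

Definition lower_set (x : L) (a : I) : L -> Prop :=
  fun y => forall b, lt b a -> eqa b x y.

Definition cls (x : L) (a : I) : L -> Prop := fun y => eqa a x y.

Definition A1 : Prop :=
  forall a b, lt a b -> forall x y, pre b x y -> eqa a x y.

Definition A2 : Prop :=
  forall x y, (forall a, eqa a x y) -> x = y.

Definition is_sqcup (x : L) (a : I) (X : L -> Prop) (y : L) : Prop :=
  lower_set x a y /\ (forall z, X z -> pre a z y) /\
  (forall z, lower_set x a z -> (forall w, X w -> pre a w z) ->
     pre a y z /\ le y z).

Definition A3 : Prop :=
  forall x a (X : L -> Prop), (forall z, X z -> lower_set x a z) ->
    exists y, is_sqcup x a X y.

Definition A4 : Prop :=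
  forall (X : L -> Prop) a y, (exists x, X x) ->
    (forall x, X x -> eqa a y x) -> eqa a y (sup X).

Definition model : Prop :=
  complete_lattice /\ nonzero_ordinal /\ preorders /\ A1 /\ A2 /\ A3 /\ A4.

(* The slice x|_alpha := \bigsqcup_alpha {x}  (the unique such element;
   chosen by Hilbert's epsilon, the default being the bottom sup(empty)). *)
Definition slice (x : L) (a : I) : L :=
  epsilon (inhabits (sup (fun _ => False))) (is_sqcup x a (fun z => z = x)).

Definition compatible (xs : I -> L) : Prop :=
  (forall a y, cls (xs a) a y -> le (xs a) y) /\
  (forall a b, lt a b -> eqa a (xs a) (xs b)).

Definition bigjoin (xs : I -> L) : L := sup (fun z => exists a, z = xs a).

End Model.

From Stdlib Require Import Classical ClassicalEpsilon FunctionalExtensionality.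

Set Implicit Arguments.

(* The key observation is that the slice x|_a is exactly the <=-least
   element of the class [x]_a (lemmas [slice_in_class], [slice_least],
   and the characterization [slice_char]).  For a compatible sequence xs with join
   x, the elements xs b with b >= a are all =_a xs a, and those with b < a
   lie below xs a, so the join equals the join of the tail {xs b | b >= a}
   and Axiom 4 gives x =_a xs a ([join_in_class]).  As xs a is least in
   its class, the characterization yields x|_a = xs a.  Conversely the
   join of the slices of x agrees with x at every level, hence equals x
   by Axiom 2.  Only the strict total order on indices is used, not
   well-foundedness. *)

Section Slices.
Variables (L : Type) (le : L -> L -> Prop) (sup : (L -> Prop) -> L).
Variables (I : Type) (lt : I -> I -> Prop) (pre : I -> L -> L -> Prop).
Hypothesis M : model le sup lt pre.

Lemma le_refl x : le x x.
Proof. destruct M as [[H _] _]; auto. Qed.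

Lemma le_anti x y : le x y -> le y x -> x = y.
Proof. destruct M as [[_ [H _]] _]; auto. Qed.

Lemma le_trans x y z : le x y -> le y z -> le x z.
Proof. destruct M as [[_ [_ [H _]]] _]; eauto. Qed.

Lemma sup_ub (X : L -> Prop) x : X x -> le x (sup X).
Proof. destruct M as [[_ [_ [_ H]]] _]; apply H. Qed.

Lemma sup_least (X : L -> Prop) u : (forall x, X x -> le x u) -> le (sup X) u.
Proof. destruct M as [[_ [_ [_ H]]] _]; apply H. Qed.

Lemma lt_irrefl a : ~ lt a a.
Proof. destruct M as [_ [[_ [H _]] _]]; auto. Qed.

Lemma lt_total a b : lt a b \/ a = b \/ lt b a.
Proof. destruct M as [_ [[_ [_ [_ [H _]]]] _]]; auto. Qed.

Lemma pre_refl a x : pre a x x.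
Proof. destruct M as [_ [_ [H _]]]; apply H. Qed.

Lemma pre_trans a x y z : pre a x y -> pre a y z -> pre a x z.
Proof. destruct M as [_ [_ [H _]]]; apply H. Qed.

Lemma axiom1 a b x y : lt a b -> pre b x y -> eqa pre a x y.
Proof. destruct M as [_ [_ [_ [H _]]]]; eauto. Qed.

Lemma axiom2 x y : (forall a, eqa pre a x y) -> x = y.
Proof. destruct M as [_ [_ [_ [_ [H _]]]]]; eauto. Qed.

Lemma axiom3 x a (X : L -> Prop) : (forall z, X z -> lower_set lt pre x a z) ->
  exists y, is_sqcup le lt pre x a X y.
Proof. destruct M as [_ [_ [_ [_ [_ [H _]]]]]]; eauto. Qed.

Lemma axiom4 (X : L -> Prop) a y : (exists x, X x) ->
  (forall x, X x -> eqa pre a y x) -> eqa pre a y (sup X).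
Proof. destruct M as [_ [_ [_ [_ [_ [_ H]]]]]]; eauto. Qed.

Lemma eqa_refl a x : eqa pre a x x.
Proof. split; apply pre_refl. Qed.

Lemma eqa_sym a x y : eqa pre a x y -> eqa pre a y x.
Proof. intros [H1 H2]; split; auto. Qed.

Lemma eqa_trans a x y z : eqa pre a x y -> eqa pre a y z -> eqa pre a x z.
Proof. intros [H1 H2] [H3 H4]; split; eapply pre_trans; eauto. Qed.

Lemma eqa_lower a b x y : lt b a -> eqa pre a x y -> eqa pre b x y.
Proof. intros Hba [Hxy _]; eapply axiom1; eauto. Qed.

Lemma class_in_lower_set x a y : eqa pre a x y -> lower_set lt pre x a y.
Proof. intros Hxy b Hba; eapply eqa_lower; eauto. Qed.

Lemma slice_spec x a :
  is_sqcup le lt pre x a (fun z => z = x) (slice le sup lt pre x a).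
Proof.
  unfold slice; apply epsilon_spec, axiom3.
  intros z -> b _; apply eqa_refl.
Qed.

Lemma slice_in_class x a : eqa pre a x (slice le sup lt pre x a).
Proof.
  destruct (slice_spec x a) as [_ [Hub Hleast]]; split.
  - now apply Hub.
  - apply (Hleast x); [apply class_in_lower_set, eqa_refl | intros w ->; apply pre_refl].
Qed.

Lemma slice_least x a y : eqa pre a x y -> le (slice le sup lt pre x a) y.
Proof.
  intros Hxy; destruct (slice_spec x a) as [_ [_ Hleast]].
  apply Hleast; [now apply class_in_lower_set | intros w ->; apply Hxy].
Qed.

Lemma slice_char x a y :
  eqa pre a x y -> (forall z, eqa pre a x z -> le y z) ->
  slice le sup lt pre x a = y.
Proof.
  intros Hxy Hmin; apply le_anti.
  - now apply slice_least.
  - apply Hmin, slice_in_class.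
Qed.

Lemma sup_same_bounds (X Y : L -> Prop) :
  (forall x, X x -> exists y, Y y /\ le x y) -> (forall y, Y y -> X y) ->
  sup X = sup Y.
Proof.
  intros HXY HYX; apply le_anti; apply sup_least.
  - intros x Hx; destruct (HXY x Hx) as [y [Hy Hxy]].
    eapply le_trans; [exact Hxy | now apply sup_ub].
  - intros y Hy; now apply sup_ub, HYX.
Qed.

(* A compatible sequence is increasing, since xs b is least in its class
   and xs a belongs to it when b < a. *)
Lemma compatible_increasing xs : compatible le lt pre xs ->
  forall a b, lt b a -> le (xs b) (xs a).
Proof. intros [Hmin Hcoh] a b Hba; apply Hmin, Hcoh, Hba. Qed.

(* The join of a compatible sequence agrees with its a-th term at level a:
   it is the join of the tail {xs b | b >= a}, all of whose members are
   =_a xs a, so Axiom 4 applies. *)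
Lemma join_in_class xs : compatible le lt pre xs ->
  forall a, eqa pre a (bigjoin sup xs) (xs a).
Proof.
  intros Hc a.
  set (tail := fun z => exists b, ~ lt b a /\ z = xs b).
  assert (Htail : bigjoin sup xs = sup tail).
  { apply sup_same_bounds.
    - intros z [b ->]; destruct (classic (lt b a)) as [Hba | Hba].
      + exists (xs a); split; [exists a; split; [apply lt_irrefl | easy] |].
        now apply compatible_increasing.
      + exists (xs b); split; [now exists b | apply le_refl].
    - intros z [b [_ ->]]; now exists b. }
  rewrite Htail; apply eqa_sym, axiom4.
  - exists (xs a), a; split; [apply lt_irrefl | easy].
  - intros z [b [Hba ->]].
    destruct (lt_total a b) as [Hab | [<- | Hba']];
      [now apply Hc | apply eqa_refl | contradiction].
Qed.

Lemma slice_of_join xs : compatible le lt pre xs ->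
  forall a, slice le sup lt pre (bigjoin sup xs) a = xs a.
Proof.
  intros Hc a; pose proof (join_in_class Hc a) as Hjoin.
  apply slice_char; [exact Hjoin |].
  intros z Hz; apply Hc, (eqa_trans (eqa_sym Hjoin) Hz).
Qed.

Lemma slices_compatible x : compatible le lt pre (slice le sup lt pre x).
Proof.
  split.
  - intros a y Hy; apply slice_least, (eqa_trans (slice_in_class x a) Hy).
  - intros b a Hba.
    apply (eqa_trans (eqa_sym (slice_in_class x b))).
    apply (eqa_lower Hba), slice_in_class.
Qed.

Lemma join_of_slices x : bigjoin sup (slice le sup lt pre x) = x.
Proof.
  apply eq_sym, axiom2; intros a.
  apply (eqa_trans (slice_in_class x a)), eqa_sym.
  apply join_in_class, slices_compatible.
Qed.

End Slices.

Theorem mainTheorem10 (L : Type) (le : L -> L -> Prop) (sup : (L -> Prop) -> L)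
  (I : Type) (lt : I -> I -> Prop) (pre : I -> L -> L -> Prop) :
  model le sup lt pre ->
  (* main claim: slices of the join of a compatible sequence *)
  (forall xs : I -> L, compatible le lt pre xs ->
     forall a, slice le sup lt pre (bigjoin sup xs) a = xs a) /\
  (* consequence: mutually inverse bijections *)
  (forall x : L, compatible le lt pre (fun a => slice le sup lt pre x a)) /\
  (forall x : L, bigjoin sup (fun a => slice le sup lt pre x a) = x) /\
  (forall xs : I -> L, compatible le lt pre xs ->
     (fun a => slice le sup lt pre (bigjoin sup xs) a) = xs).
Proof.
  intros M; split; [| split; [| split]].
  - exact (slice_of_join M).
  - exact (slices_compatible M).
  - exact (join_of_slices M).
  - intros xs Hc; apply functional_extensionality, (slice_of_join M Hc).
Qed.
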